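(* Let $m\ge2$ be such that $m+1$ is a power of $2$, and let $f$ be the two-digit base-$m$ Kaprekar map on $X=\{0,\dots,m^2-1\}$. Then $K(x)=\{0\}$ for every $x\in X$.
   Context: For an integer $m\ge2$, $X=\{0,1,\dots,m^2-1\}$, each element written with exactly two base-$m$ digits (leading zeros allowed); $f(x)=D(x)-A(x)$ where $D(x)$ (resp. $A(x)$) has the digits of $x$ in nonincreasing (resp. nondecreasing) order. The step $S(x)$ is the least $s\ge0$ such that $f^{s+t}(x)=f^s(x)$ for some $t\ge1$; $T(x)$ is the least $t\ge1$ with $f^{S(x)+t}(x)=f^{S(x)}(x)$; the fixed set of $x$ is $K(x)=\{f^{S(x)+i}(x):0\le i<T(x)\}$. *)

From mathcomp Require Import all_boot.
Set Implicit Arguments. Unset Strict Implicit. Unset Printing Implicit Defensive.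

Definition desc_num (m x : nat) : nat :=
  maxn (x %/ m) (x %% m) * m + minn (x %/ m) (x %% m).
Definition asc_num (m x : nat) : nat :=
  minn (x %/ m) (x %% m) * m + maxn (x %/ m) (x %% m).
Definition kaprekar (m x : nat) : nat := desc_num m x - asc_num m x.

Definition eventually_periodic_from (m x s : nat) : Prop :=
  exists t, 0 < t /\ iter (s + t) (kaprekar m) x = iter s (kaprekar m) x.

Definition is_step (m x s : nat) : Prop :=
  eventually_periodic_from m x s /\
  forall s', eventually_periodic_from m x s' -> s <= s'.

Definition is_period (m x s t : nat) : Prop :=
  0 < t /\ iter (s + t) (kaprekar m) x = iter s (kaprekar m) x /\
  forall t', 0 < t' -> iter (s + t') (kaprekar m) x = iter s (kaprekar m) x ->
             t <= t'.

Definition fixed_set (m x s t : nat) : pred nat :=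
  [pred y | y \in [seq iter (s + i) (kaprekar m) x | i <- iota 0 t]].

From mathcomp Require Import all_boot zify.
Set Implicit Arguments. Unset Strict Implicit. Unset Printing Implicit Defensive.

(* Write x = a*m + b with digits a, b < m.  Then
   f(x) = |a - b| * (m - 1), so after one step every value is a multiple
   d*(m-1) of m - 1 with 0 <= d < m.  For 0 < d < m the number d*(m-1) has
   digits d - 1 and m - d, hence f(d*(m-1)) = |m + 1 - 2d| * (m - 1): the
   Kaprekar map is conjugate on these multiples to the map
   g(d) = |m + 1 - 2d| (g(0) = 0) on digits d < m.  When m + 1 = 2^k, the map g
   raises the power of 2 dividing d (2^i | d implies 2^(i+1) | g d for i < k),
   so after k steps the digit is a multiple of 2^k > m, i.e. 0.  Thus every
   orbit reaches 0 after k + 1 steps, and 0 is a fixed point of f.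
   A general lemma on orbits reaching a fixed point z then shows that every
   periodic point of such an orbit is z; so S(x) is the first time the orbit
   hits 0, T(x) = 1 and K(x) = {0}. *)

Definition digit_gap (m x : nat) : nat :=
  maxn (x %/ m) (x %% m) - minn (x %/ m) (x %% m).

Lemma kaprekar_digit_gap (m x : nat) : kaprekar m x = digit_gap m x * (m - 1).
Proof.
rewrite /kaprekar /desc_num /asc_num /digit_gap.
move: (x %/ m) (x %% m) => a b; case: (leqP a b) => ab; nia.
Qed.

Lemma digit_gap_lt (m x : nat) : 0 < m -> x < m ^ 2 -> digit_gap m x < m.
Proof.
move=> m_gt0; rewrite -mulnn => x_lt.
have a_lt : x %/ m < m by rewrite ltn_divLR.
have b_lt : x %% m < m by rewrite ltn_mod.
rewrite /digit_gap; move: (x %/ m) (x %% m) a_lt b_lt => a b; lia.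
Qed.

Lemma kaprekar0 (m : nat) : kaprekar m 0 = 0.
Proof. by rewrite kaprekar_digit_gap /digit_gap div0n mod0n. Qed.

(* The map induced by f on the digit d of the multiple d*(m-1). *)
Definition gap_step (m d : nat) : nat :=
  if d == 0 then 0 else (m.+1 - d * 2) + (d * 2 - m.+1).

Lemma gap_step_lt (m d : nat) : 2 <= m -> d < m -> gap_step m d < m.
Proof. by rewrite /gap_step; case: eqP; lia. Qed.

(* For d < m, d*(m-1) has digits d - 1 and m - d, so f acts as gap_step. *)
Lemma kaprekar_multiple (m d : nat) :
  d < m -> kaprekar m (d * (m - 1)) = gap_step m d * (m - 1).
Proof.
move=> d_lt; rewrite kaprekar_digit_gap /gap_step.
case: eqP => [->|/eqP d_neq0]; first by rewrite mul0n /digit_gap div0n mod0n.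
have split_d : d * (m - 1) = (d - 1) * m + (m - d) by nia.
have hi : d * (m - 1) %/ m = d - 1 by rewrite split_d divnMDl ?divn_small; lia.
have lo : d * (m - 1) %% m = m - d by rewrite split_d modnMDl modn_small; lia.
rewrite /digit_gap hi lo; congr (_ * _); lia.
Qed.

Lemma iter_gap_step_lt (m d n : nat) : 2 <= m -> d < m -> iter n (gap_step m) d < m.
Proof. by move=> m_ge2 d_lt; elim: n => // n IH; rewrite iterS gap_step_lt. Qed.

Lemma iter_kaprekar_multiple (m d n : nat) : 2 <= m -> d < m ->
  iter n (kaprekar m) (d * (m - 1)) = iter n (gap_step m) d * (m - 1).
Proof.
move=> m_ge2 d_lt; elim: n => // n IH.
by rewrite !iterS IH kaprekar_multiple // iter_gap_step_lt.
Qed.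

Lemma gap_step_dvd (m d i : nat) :
  2 ^ i.+1 %| m.+1 -> 2 ^ i %| d -> 2 ^ i.+1 %| gap_step m d.
Proof.
move=> dvd_m dvd_d; rewrite /gap_step; case: eqP => // _.
have dvd_2d : 2 ^ i.+1 %| d * 2 by rewrite expnSr dvdn_pmul2r.
by rewrite dvdn_add // dvdn_sub.
Qed.

Lemma iter_gap_step_zero (m k d : nat) :
  2 <= m -> m.+1 = 2 ^ k -> d < m -> iter k (gap_step m) d = 0.
Proof.
move=> m_ge2 mk d_lt.
have dvd_iter i : i <= k -> 2 ^ i %| iter i (gap_step m) d.
  elim: i => [|i IH] i_le; first exact: dvd1n.
  by rewrite iterS gap_step_dvd ?IH 1?ltnW // mk dvdn_exp2l.
have below_m := iter_gap_step_lt k m_ge2 d_lt.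
(* A nonzero multiple of 2^k = m + 1 would exceed m. *)
apply/eqP; apply: contraTT below_m => nz.
have : 2 ^ k <= iter k (gap_step m) d by apply: dvdn_leq; rewrite ?lt0n ?dvd_iter.
lia.
Qed.

Lemma kaprekar_reaches_zero (m k x : nat) :
  2 <= m -> m.+1 = 2 ^ k -> x < m ^ 2 -> iter k.+1 (kaprekar m) x = 0.
Proof.
move=> m_ge2 mk x_lt; have gap_lt := digit_gap_lt (ltnW m_ge2) x_lt.
by rewrite iterSr kaprekar_digit_gap iter_kaprekar_multiple // iter_gap_step_zero.
Qed.

Section OrbitToFixedPoint.
Variables (T : Type) (f : T -> T) (z x : T) (N : nat).
Hypotheses (f_z : f z = z) (reach : iter N f x = z).

Lemma iter_after_fixed (n : nat) : N <= n -> iter n f x = z.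
Proof.
move=> le_Nn; rewrite -(subnK le_Nn) iterD reach.
by elim: (n - N) => //= j ->.
Qed.

Lemma periodic_point_fixed (s t : nat) :
  0 < t -> iter (s + t) f x = iter s f x -> iter s f x = z.
Proof.
move=> t_gt0 per.
have per_mul n : iter (s + t * n) f x = iter s f x.
  elim: n => [|n IH]; first by rewrite muln0 addn0.
  by rewrite mulnS addnCA iterD IH -iterD addnC per.
by rewrite -(per_mul N) iter_after_fixed //; nia.
Qed.

End OrbitToFixedPoint.

Theorem corollary3p3p2 (m : nat) :
  2 <= m -> (exists k, m.+1 = 2 ^ k) ->
  forall x, x < m ^ 2 ->
  exists s t, is_step m x s /\ is_period m x s t /\
    forall y, fixed_set m x s t y <-> y = 0.
Proof.
move=> m_ge2 [k mk] x x_lt.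
have reach := kaprekar_reaches_zero m_ge2 mk x_lt.
have hits_zero : exists s, iter s (kaprekar m) x == 0 by exists k.+1; rewrite reach.
case: (ex_minnP hits_zero) => s /eqP at_zero s_min.
have zero_next : iter (s + 1) (kaprekar m) x = iter s (kaprekar m) x.
  by rewrite addn1 iterS at_zero kaprekar0.
exists s, 1; split; [|split].
- split; first by exists 1.
  move=> s' [t [t_gt0 per]]; apply: s_min; apply/eqP.
  exact: periodic_point_fixed (kaprekar0 m) reach _ _ t_gt0 per.
- by split=> //; split=> // t' t'_gt0.
- by move=> y; rewrite /fixed_set inE /= addn0 at_zero inE; split=> /eqP.
Qed.
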